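(* Let $p$ be a prime, $q$ a power of $p$, $V$ a finite-dimensional $\mathbb{F}_q$-vector space, and $k=q^ar$ with integers $a\ge0$, $1\le r\le q-1$. For each nonzero $y\in V^*$ and any linear complement $W$ of $\mathbb{F}_q y$ in $V^*$, one has the equality of ideals of $\mathrm{Sym}^*(V^* )$ $$I(V^*,k)+(y^k)=I(W,qk)+(y^k),$$ where $I(W,qk)$ denotes the ideal of $\mathrm{Sym}^*(V^* )$ generated by the generators of $I(W,qk)\subset\mathrm{Sym}^*(W)$.
   Context: For a finite-dimensional $\mathbb{F}_q$-vector space $U$ (here $U=V^*$ or $U=W$), fix for each line $\ell$ of $U$ a nonzero $u_\ell\in\ell$; for a hyperplane $H$ of $U$, $V_{H,U}=\prod_{\ell\subset U,\ \ell\not\subset H}u_\ell$; $I(U,m)$ is the ideal of $\mathrm{Sym}^*(U)$ generated by all $V_{H,U}^m$ with $H$ a hyperplane of $U$ (independent, up to units, of the choice of $u_\ell$). *)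

From HB Require Import structures.
From mathcomp Require Import all_boot all_order all_algebra.
From mathcomp Require Import mpoly.
Set Implicit Arguments. Unset Strict Implicit. Unset Printing Implicit Defensive.
Import GRing.Theory.
Local Open Scope ring_scope.

(* V^* is identified with the row space 'rV[F]_n (a basis of V^* is fixed),
   so Sym^*(V^* ) is the polynomial ring {mpoly F[n]}.  Subspaces of V^* are
   represented by matrices (their row spaces, mxalgebra). *)

Definition lin (F : fieldType) (n : nat) (v : 'rV[F]_n) : {mpoly F[n]} :=
  \sum_(i < n) v 0 i *: 'X_i.

Definition lines (F : finFieldType) (n : nat) (U : 'M[F]_n) : {set 'M[F]_n} :=
  [set <<v>>%MS | v in [set v : 'rV[F]_n | (v != 0) && (v <= U)%MS]].

(* V_{H,U} = prod of u_l over lines l of U not contained in H,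
   where u : lines -> nonzero representative vectors *)
Definition VHU (F : finFieldType) (n : nat) (u : 'M[F]_n -> 'rV[F]_n)
  (H U : 'M[F]_n) : {mpoly F[n]} :=
  \prod_(l in lines U | ~~ (l <= H)%MS) lin (u l).

(* g is one of the generators V_{H,U}^m of I(U,m), H a hyperplane of U *)
Definition Igen (F : finFieldType) (n : nat) (u : 'M[F]_n -> 'rV[F]_n)
  (U : 'M[F]_n) (m : nat) (g : {mpoly F[n]}) : Prop :=
  exists H : 'M[F]_n, (H <= U)%MS /\ (\rank H).+1 = \rank U /\ g = VHU u H U ^+ m.

Definition in_ideal (R : comNzRingType) (P : R -> Prop) (x : R) : Prop :=
  exists s : seq (R * R),
    (forall pr, pr \in s -> P pr.2) /\ x = \sum_(pr <- s) pr.1 * pr.2.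

From HB Require Import structures.
From mathcomp Require Import all_boot all_order all_algebra.
From mathcomp Require Import mpoly.
From mathcomp Require Import finfield.
From mathcomp Require Import zify ring.
Set Implicit Arguments. Unset Strict Implicit. Unset Printing Implicit Defensive.
Import GRing.Theory.
Local Open Scope ring_scope.

(* Let H be a hyperplane of V^* containing y, cut out by a vector c of V.  Up to
   a nonzero scalar, V_{H,V^*} is the product of the forms v with v(c) = 1, and
   V_{H∩W,W} the product of those lying in W.  Writing v = w + b y with w in
   W, the first product groups into \prod_w \prod_b (w + b y), and
   \prod_b (w + b y) = w^q - w y^(q-1).  Since k = q^a r with r <= q - 1, the
   Frobenius gives (w^q - w y^(q-1))^k = w^(qk) modulo y^k, hence
   V_{H,V^*}^k = e V_{H∩W,W}^(qk) modulo y^k for some nonzero e.  Every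
   hyperplane of W is H ∩ W for H = H' + y, and when y is not in H the form y
   divides V_{H,V^*}; so both ideals agree modulo y^k. *)

Section IdealMembership.
Variable R : comNzRingType.
Implicit Types (P Q : R -> Prop) (b x y : R).

Lemma in_ideal0 P : in_ideal P 0.
Proof. by exists [::]; rewrite big_nil. Qed.

Lemma in_ideal_gen P g : P g -> in_ideal P g.
Proof.
move=> Pg; exists [:: (1, g)]; rewrite big_seq1 mul1r.
by split=> // pr; rewrite inE => /eqP ->.
Qed.

Lemma in_idealD P x y : in_ideal P x -> in_ideal P y -> in_ideal P (x + y).
Proof.
move=> [s [Ps ->]] [t [Pt ->]]; exists (s ++ t); rewrite big_cat.
by split=> // pr; rewrite mem_cat => /orP[/Ps|/Pt].
Qed.

Lemma in_idealMl P a x : in_ideal P x -> in_ideal P (a * x).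
Proof.
move=> [s [Ps ->]]; exists [seq (a * pr.1, pr.2) | pr <- s]; split.
  by move=> pr /mapP[pr' /Ps Ppr' ->].
by rewrite big_map mulr_sumr; apply: eq_bigr => pr _; rewrite mulrA.
Qed.

Lemma in_ideal_trans P Q x :
  (forall g, P g -> in_ideal Q g) -> in_ideal P x -> in_ideal Q x.
Proof.
move=> PQ [s [Ps ->]]; elim: s Ps => [|pr s IHs] Ps.
  by rewrite big_nil; apply: in_ideal0.
rewrite big_cons; apply: in_idealD.
  by apply/in_idealMl/PQ/Ps; rewrite mem_head.
by apply: IHs => pr' s_pr'; apply: Ps; rewrite inE s_pr' orbT.
Qed.

Definition eqmod b x y := exists t, x = y + b * t.

Lemma eqmod_refl b x : eqmod b x x.
Proof. by exists 0; rewrite mulr0 addr0. Qed.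

Lemma eqmod_sym b x y : eqmod b x y -> eqmod b y x.
Proof. by move=> [t ->]; exists (- t); ring. Qed.

Lemma eqmodM b x x' y y' :
  eqmod b x x' -> eqmod b y y' -> eqmod b (x * y) (x' * y').
Proof. by move=> [t ->] [s ->]; exists (t * y' + x' * s + b * t * s); ring. Qed.

Lemma eqmodX b x y m : eqmod b x y -> eqmod b (x ^+ m) (y ^+ m).
Proof.
move=> xy; elim: m => [|m IHm]; first exact: eqmod_refl.
by rewrite !exprS; apply: eqmodM.
Qed.

Lemma eqmod_prod (I : finType) (D : pred I) b (f g : I -> R) :
  (forall i, D i -> eqmod b (f i) (g i)) ->
  eqmod b (\prod_(i | D i) f i) (\prod_(i | D i) g i).
Proof.
move=> fg; elim/big_rec2: _ => [|i x y Di]; first exact: eqmod_refl.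
by apply: eqmodM; apply: fg.
Qed.

Lemma eqmod_in_ideal P b x y :
  eqmod b x y -> in_ideal P y -> in_ideal P b -> in_ideal P x.
Proof.
by move=> [t ->] Py Pb; rewrite mulrC; apply: in_idealD => //; apply: in_idealMl.
Qed.

End IdealMembership.

Lemma eqmodZ (F : fieldType) (A : comAlgType F) (b x y : A) (c : F) :
  eqmod b x y -> eqmod b (c *: x) (c *: y).
Proof. by move=> [t ->]; exists (c *: t); rewrite scalerDr scalerAr. Qed.

Section FiniteField.
Variable F : finFieldType.
Local Notation q := #|F|.

Lemma exprDn_card_pow (A : comAlgType F) (x y : A) a :
  (x + y) ^+ (q ^ a) = x ^+ (q ^ a) + y ^+ (q ^ a).
Proof.
apply: exprDn_pchar; have [p p_pr pF] := finPcharP F.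
rewrite (card_pprimeChar pF) -expnM pnatX.
by rewrite (pnatE _ p_pr) (pchar_lalg A) pF.
Qed.

Lemma finField_genPoly_rmorph (K : comNzRingType) (f : {rmorphism F -> K}) t :
  t ^+ q - t = \prod_x (t - f x).
Proof.
have /(congr1 (fun p => (map_poly f p).[t])) := finField_genPoly F.
rewrite rmorphB /= map_polyXn map_polyX !hornerE => ->.
rewrite rmorph_prod /= horner_prod; apply: eq_bigr => x _.
by rewrite map_polyXsubC hornerXsubC.
Qed.

Lemma pencil_pow_eqmod (A : comAlgType F) (z Y : A) a r : (r <= q.-1)%N ->
  eqmod (Y ^+ (q ^ a * r)) ((z ^+ q - z * Y ^+ q.-1) ^+ (q ^ a * r))
        (z ^+ (q * (q ^ a * r))).
Proof.
move=> r_le; rewrite [X in eqmod _ X _]exprM.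
rewrite exprDn_card_pow -mulNr exprMn -!exprM.
have k_le : (q ^ a * r <= q.-1 * q ^ a)%N by rewrite mulnC leq_mul.
rewrite -(subnKC k_le) exprD mulnA [X in eqmod _ _ X]exprM; apply: eqmodX.
by exists ((- z) ^+ (q ^ a) * Y ^+ (q.-1 * q ^ a - q ^ a * r)); rewrite mulrCA.
Qed.

Lemma prod_pencil n (z Y : {mpoly F[n]}) :
  \prod_(c : F) (z + c *: Y) = z ^+ q - z * Y ^+ q.-1.
Proof.
have q_gt1 := finNzRing_gt1 F.
have [->|Y0] := eqVneq Y 0.
  under eq_bigr do rewrite scaler0 addr0.
  by rewrite prodr_const cardT -cardE expr0n eqn0Ngt -subn1 subn_gt0 q_gt1 mulr0 subr0.
apply/eqP; rewrite -tofrac_eq; apply/eqP.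
rewrite rmorphB rmorphM !rmorphXn rmorph_prod.
have Y'0 : tofrac Y != 0 by rewrite tofrac_eq0.
(* Homogenize [t ^+ q - t = \prod_c (t - c)] at [t = z / Y]. *)
pose t := tofrac z / tofrac Y.
have zE : tofrac z = tofrac Y * t by rewrite mulrC divfK.
have -> : tofrac z ^+ q - tofrac z * tofrac Y ^+ q.-1 = tofrac Y ^+ q * (t ^+ q - t).
  rewrite zE exprMn mulrBr; congr (_ - _).
  by rewrite mulrAC -exprS prednK // ltnW.
have -> : tofrac Y ^+ q = \prod_(c : F) tofrac Y by rewrite prodr_const cardT -cardE.
rewrite (finField_genPoly_rmorph (@tofrac _ \o in_alg {mpoly F[n]})) -big_split /=.
rewrite (reindex_inj oppr_inj); apply: eq_bigr => c _ /=.
by rewrite scaleNr -[c *: Y]mulr_algl rmorphB rmorphM /= zE; ring.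
Qed.

End FiniteField.

Section Lines.
Variables (F : finFieldType) (n : nat).
Implicit Types (v w : 'rV[F]_n) (c : 'cV[F]_n) (l H U : 'M[F]_n).

Lemma linD v w : lin (v + w) = lin v + lin w.
Proof. by rewrite /lin -big_split; apply: eq_bigr => i _; rewrite mxE scalerDl. Qed.

Lemma linZ (a : F) v : lin (a *: v) = a *: lin v.
Proof. by rewrite /lin scaler_sumr; apply: eq_bigr => i _; rewrite mxE scalerA. Qed.

(* The value of the linear form [v] of [V^* = 'rV_n] at the vector [c] of [V]. *)
Definition pairing c v : F := (v *m c) 0 0.

Lemma pairingD c v w : pairing c (v + w) = pairing c v + pairing c w.
Proof. by rewrite /pairing mulmxDl mxE. Qed.

Lemma pairingZ c (a : F) v : pairing c (a *: v) = a * pairing c v.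
Proof. by rewrite /pairing -scalemxAl mxE. Qed.

Lemma pairing0 c : pairing c 0 = 0.
Proof. by rewrite /pairing mul0mx mxE. Qed.

Lemma hyperplane_kernel H : (\rank H).+1 = n ->
  exists c, forall v, (v <= H)%MS = (pairing c v == 0).
Proof.
move=> rH; set M := cokermx H.
have rM : \rank M = 1%N by rewrite mxrank_coker; lia.
have [j Mj] : exists j, col j M != 0.
  apply/existsP; apply: contraT; rewrite negb_exists => /forallP M0.
  suff : M == 0 by rewrite -mxrank_eq0 rM.
  by apply/eqP/matrixP => i k; have /negPn/eqP/colP/(_ i) := M0 k; rewrite !mxE.
have /submxP[D ME] : (M^T <= (col j M)^T)%MS.
  have /andP[_] : (row j M^T == M^T)%MS.
    rewrite -(mxrank_leqif_eq (row_sub j M^T)).2 rank_rV -tr_col trmx_eq0 Mj.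
    by rewrite mxrank_tr rM.
  by rewrite tr_col.
exists (col j M) => v; rewrite submxE /pairing -/M.
apply/eqP/eqP => [vM0 | vc0].
  by rewrite colE mulmxA vM0 mul0mx mxE.
rewrite -[M]trmxK ME trmx_mul trmxK mulmxA [v *m _]mx11_scalar vc0.
by rewrite mul_scalar_mx scale0r.
Qed.

Variables (u : 'M[F]_n -> 'rV[F]_n).
Hypothesis hu : forall l, l \in lines 1%:M -> u l != 0 /\ (u l <= l)%MS.

Lemma lines_sub U l : l \in lines U -> (l <= U)%MS.
Proof. by case/imsetP => v; rewrite inE => /andP[_ vU] ->; rewrite genmxE. Qed.

Lemma genmx_lines U v : v != 0 -> (v <= U)%MS -> <<v>>%MS \in lines U.
Proof. by move=> v0 vU; apply/imsetP; exists v; rewrite // inE v0. Qed.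

Lemma lines1 U l : l \in lines U -> l \in lines 1%:M.
Proof.
by case/imsetP => v; rewrite inE => /andP[v0 _] ->; rewrite genmx_lines ?submx1.
Qed.

Lemma u_genmx v : v != 0 -> exists2 a : F, a != 0 & u <<v>>%MS = a *: v.
Proof.
move=> v0; have [u0] := hu (genmx_lines v0 (submx1 v)).
rewrite genmxE => /sub_rVP[a uE]; exists a => //.
by apply: contraNneq u0 => a0; rewrite uE a0 scale0r.
Qed.

Lemma genmx_u l : l \in lines 1%:M -> <<u l>>%MS = l.
Proof.
case/imsetP => v; rewrite inE => /andP[v0 _] ->.
have [a a0 ->] := u_genmx v0; exact/eq_genmx/eqmx_scale.
Qed.

Lemma VHU_level_prod U H c :
  (forall v, (v <= U)%MS -> (v <= H)%MS = (pairing c v == 0)) ->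
  exists2 e : F, e != 0 &
    VHU u H U = e *: \prod_(v | (v <= U)%MS && (pairing c v == 1)) lin v.
Proof.
move=> kerH; pose S := [set l in lines U | ~~ (l <= H)%MS].
have S_lines l : l \in S -> l \in lines 1%:M by rewrite inE => /andP[/lines1].
have S_u l : l \in S -> (u l <= U)%MS /\ pairing c (u l) != 0.
  move=> Sl; move: (Sl); rewrite inE => /andP[lU lH].
  have [_ ul] := hu (S_lines l Sl); have uU := submx_trans ul (lines_sub lU).
  split=> //; rewrite -kerH //; apply: contra lH => uH.
  by rewrite -(genmx_u (S_lines l Sl)) genmxE.
pose w l := (pairing c (u l))^-1 *: u l.
have genmx_w l : l \in S -> <<w l>>%MS = l.
  move=> Sl; rewrite -[RHS](genmx_u (S_lines l Sl)); apply/eq_genmx/eqmx_scale.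
  by rewrite invr_eq0; case: (S_u l Sl).
have w_inj : {in S &, injective w}.
  by move=> l1 l2 S1 S2 w12; rewrite -(genmx_w _ S1) -(genmx_w _ S2) w12.
exists (\prod_(l in S) pairing c (u l)); first by apply/prodf_neq0 => l /S_u[].
have -> : VHU u H U = \prod_(l in S) (pairing c (u l) *: lin (w l)).
  rewrite /VHU; apply: eq_big => [l | l Sl]; first by rewrite inE.
  have {}Sl : l \in S by rewrite inE.
  by rewrite /w linZ scalerA divff ?scale1r //; case: (S_u l Sl).
rewrite scaler_prod -(big_imset _ w_inj); congr (_ *: _); apply: eq_bigl => v.
apply/imsetP/andP => [[l Sl ->] | [vU /eqP cv1]].
  by have [uU cu0] := S_u l Sl; rewrite scalemx_sub // /w pairingZ mulVf.
have v0 : v != 0.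
  by apply/eqP => v0; move: cv1; rewrite v0 pairing0 => /esym/eqP; rewrite oner_eq0.
exists <<v>>%MS; first by rewrite inE genmx_lines //= genmxE kerH // cv1 oner_eq0.
have [a a0 uE] := u_genmx v0.
by rewrite /w uE pairingZ cv1 mulr1 scalerA mulVf ?scale1r.
Qed.

Lemma VHU_eqmx H1 H2 U : (H1 :=: H2)%MS -> VHU u H1 U = VHU u H2 U.
Proof. by move=> eqH; apply: eq_bigl => l; rewrite eqH. Qed.

Lemma VHU_lin_factor H v : v != 0 -> ~~ (v <= H)%MS ->
  exists p, VHU u H 1%:M = lin v * p.
Proof.
move=> v0 vNH; have v1 := genmx_lines v0 (submx1 v).
rewrite /VHU (bigD1 <<v>>%MS) /=; last by rewrite v1 genmxE.
have [b _ ->] := u_genmx v0; rewrite linZ -scalerAl scalerAr.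
by eexists.
Qed.

End Lines.

Section Complement.
Variables (F : finFieldType) (n : nat) (y : 'rV[F]_n) (W : 'M[F]_n).
Implicit Types (v w : 'rV[F]_n) (H : 'M[F]_n).

Hypothesis Wy1 : ((W + y)%MS == 1%:M)%MS.

Lemma complement_decomp v : exists w (b : F), (w <= W)%MS /\ v = w + b *: y.
Proof.
have /sub_addsmxP[[v1 v2] /= ->] := submx_trans (submx1 v) (proj2 (andP Wy1)).
have /sub_rVP[b ->] : (v2 *m y <= y)%MS := submxMl _ _.
by exists (v1 *m W), b; rewrite submxMl.
Qed.

Lemma hyperplane_capmx H : (\rank H).+1 = n -> (y <= H)%MS ->
  (\rank (H :&: W)%MS).+1 = \rank W.
Proof.
move=> rH yH; have rHW : \rank (H + W)%MS = n.
  apply/eqP; rewrite eqn_leq rank_leq_col -{1}(mxrank1 F n) mxrankS //.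
  apply: submx_trans (proj2 (andP Wy1)) _.
  by rewrite addsmx_sub addsmxSr (submx_trans yH) ?addsmxSl.
by have := mxrank_sum_cap H W; rewrite rHW; lia.
Qed.

Hypothesis Wy0 : ((W :&: y)%MS == (0 : 'M[F]_n))%MS.

Lemma addsmx_capmx_complement H : (H <= W)%MS -> ((H + y) :&: W :=: H)%MS.
Proof.
move=> HW; apply/eqmxP/andP; split; last by rewrite sub_capmx addsmxSl HW.
rewrite -(matrix_modl _ HW) addsmx_sub submx_refl capmxC.
by rewrite (submx_trans (proj1 (andP Wy0))) ?sub0mx.
Qed.

Hypothesis y0 : y != 0.

Lemma complement_inj w1 w2 (b1 b2 : F) : (w1 <= W)%MS -> (w2 <= W)%MS ->
  w1 + b1 *: y = w2 + b2 *: y -> w1 = w2 /\ b1 = b2.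
Proof.
move=> w1W w2W e.
have w12 : w1 - w2 = (b2 - b1) *: y.
  rewrite -(addrKA (b1 *: y) w1 w2) e [w2 + _]addrC [b1 *: y + w2]addrC.
  by rewrite addrKA scalerBl.
have : (w1 - w2 <= W :&: y)%MS.
  by rewrite sub_capmx addmx_sub ?eqmx_opp //= w12 scalemx_sub.
move/submx_trans/(_ (proj1 (andP Wy0))); rewrite submx0 w12 scaler_eq0 (negPf y0).
rewrite orbF subr_eq0 => /eqP b12; split=> //.
by apply/eqP; rewrite -subr_eq0 w12 b12 subrr scale0r.
Qed.

Lemma prod_level_complement c : pairing c y = 0 ->
  \prod_(v | (v <= 1%:M)%MS && (pairing c v == 1)) lin v =
  \prod_(w | (w <= W)%MS && (pairing c w == 1)) \prod_(b : F) lin (w + b *: y).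
Proof.
move=> cy0; rewrite pair_big /=.
have pairing_shift w (b : F) : pairing c (w + b *: y) = pairing c w.
  by rewrite pairingD pairingZ cy0 mulr0 addr0.
pose h (p : 'rV[F]_n * F) := p.1 + p.2 *: y.
pose T := [set p : 'rV[F]_n * F | (p.1 <= W)%MS && (pairing c p.1 == 1)].
have h_inj : {in T &, injective h}.
  move=> [w1 b1] [w2 b2]; rewrite !inE /= => /andP[w1W _] /andP[w2W _].
  by rewrite /h /= => /(complement_inj w1W w2W)[-> ->].
transitivity (\prod_(p in T) lin (h p)); last by apply: eq_bigl => p; rewrite inE andbT.
rewrite -(big_imset _ h_inj); apply: eq_bigl => v; rewrite submx1 /=.
apply/idP/imsetP => [cv1 | [[w b]]]; last first.
  by rewrite inE /= => /andP[_ cw1] ->; rewrite pairing_shift.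
have [w [b [wW vE]]] := complement_decomp v.
by exists (w, b); rewrite // inE /= wW -(pairing_shift w b) -vE.
Qed.

Lemma rank_complement : (\rank W).+1 = n.
Proof.
have := mxrank_sum_cap W y.
by rewrite (eqmx_rank Wy1) mxrank1 (eqmx_rank Wy0) mxrank0 rank_rV y0; lia.
Qed.

Lemma hyperplane_addsmx H : (H <= W)%MS -> (\rank H).+1 = \rank W ->
  (\rank (H + y)%MS).+1 = n.
Proof.
move=> HW rH; have rHy : \rank (H :&: y)%MS = 0%N.
  apply/eqP; rewrite -leqn0.
  by have := mxrankS (capmxS HW (submx_refl y)); rewrite (eqmx_rank Wy0) mxrank0.
have := mxrank_sum_cap H y; have := rank_complement.
by rewrite rHy rank_rV y0; lia.
Qed.

End Complement.

Section HyperplaneGenerators.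
Variables (F : finFieldType) (n : nat) (u : 'M[F]_n -> 'rV[F]_n).
Hypothesis hu : forall l, l \in lines 1%:M -> u l != 0 /\ (u l <= l)%MS.
Variables (y : 'rV[F]_n) (W : 'M[F]_n).
Hypotheses (y0 : y != 0) (Wy0 : ((W :&: y)%MS == (0 : 'M[F]_n))%MS)
  (Wy1 : ((W + y)%MS == 1%:M)%MS).
Variables (a r : nat).
Hypothesis r_le : (r <= #|F|.-1)%N.
Local Notation q := #|F|.
Local Notation k := (q ^ a * r)%N.
Local Notation Y := (lin y).

Lemma VHU_eqmod H : (\rank H).+1 = n -> (y <= H)%MS ->
  exists2 e : F, e != 0 &
    eqmod (Y ^+ k) (VHU u H 1%:M ^+ k) (e *: VHU u (H :&: W)%MS W ^+ (q * k)).
Proof.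
move=> rH yH; have [c kerH] := hyperplane_kernel rH.
have cy0 : pairing c y = 0 by apply/eqP; rewrite -kerH.
have [e1 e10 ->] := VHU_level_prod hu (U := 1%:M) (fun v _ => kerH v).
have kerHW v : (v <= W)%MS -> (v <= H :&: W)%MS = (pairing c v == 0).
  by move=> vW; rewrite sub_capmx vW andbT kerH.
have [e2 e20 ->] := VHU_level_prod hu kerHW.
rewrite (prod_level_complement Wy1 Wy0 y0 cy0) !exprZn.
exists (e1 ^+ k / e2 ^+ (q * k)); first by rewrite mulf_neq0 ?invr_eq0 ?expf_neq0.
rewrite scalerA divfK ?expf_neq0 //; apply: eqmodZ; rewrite -!prodrXl.
apply: eqmod_prod => w _; under eq_bigr do rewrite linD linZ.
by rewrite prod_pencil; apply: pencil_pow_eqmod.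
Qed.

Lemma Igen_complement_in_ideal g : Igen u W (q * k) g ->
  in_ideal (fun g => Igen u 1%:M k g \/ g = Y ^+ k) g.
Proof.
case=> H [HW [rH ->]]; have rHy := hyperplane_addsmx Wy1 Wy0 y0 HW rH.
have [e e0] := VHU_eqmod rHy (addsmxSr H y).
rewrite (VHU_eqmx _ _ (addsmx_capmx_complement Wy0 HW)) => /eqmod_sym VHU_eq.
have -> : VHU u H W ^+ (q * k) = e^-1%:A * (e *: VHU u H W ^+ (q * k)).
  by rewrite mulr_algl scalerA mulVf ?scale1r.
apply/in_idealMl/(eqmod_in_ideal VHU_eq); apply: in_ideal_gen; last by right.
by left; exists (H + y)%MS; rewrite submx1 mxrank1.
Qed.

Lemma Igen_full_in_ideal g : Igen u 1%:M k g ->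
  in_ideal (fun g => Igen u W (q * k) g \/ g = Y ^+ k) g.
Proof.
case=> H [_ [rH ->]]; rewrite mxrank1 in rH.
have [yH | yNH] := boolP (y <= H)%MS.
  have [e _ VHU_eq] := VHU_eqmod rH yH.
  apply: (eqmod_in_ideal VHU_eq); last by apply: in_ideal_gen; right.
  rewrite -mulr_algl; apply/in_idealMl/in_ideal_gen; left.
  by exists (H :&: W)%MS; rewrite capmxSr (hyperplane_capmx Wy1).
have [p ->] := VHU_lin_factor hu y0 yNH.
by rewrite exprMn mulrC; apply/in_idealMl/in_ideal_gen; right.
Qed.

End HyperplaneGenerators.

Theorem lemma4p5 (F : finFieldType) (n a r : nat) (u : 'M[F]_n -> 'rV[F]_n)
  (hu : forall l, l \in lines (1%:M : 'M[F]_n) -> u l != 0 /\ (u l <= l)%MS)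
  (hr : (1 <= r <= #|F|.-1)%N)
  (y : 'rV[F]_n) (W : 'M[F]_n)
  (hy : y != 0) (hW1 : ((W :&: y)%MS == (0 : 'M[F]_n))%MS) (hW2 : ((W + y)%MS == (1%:M : 'M[F]_n))%MS) :
  let k := (#|F| ^ a * r)%N in
  forall f : {mpoly F[n]},
    in_ideal (fun g => Igen u 1%:M k g \/ g = lin y ^+ k) f <->
    in_ideal (fun g => Igen u W (#|F| * k) g \/ g = lin y ^+ k) f.
Proof.
move=> k; rewrite {}/k => f; have r_le : (r <= #|F|.-1)%N by case/andP: hr.
split; apply: in_ideal_trans => g [Ig | ->]; try by apply: in_ideal_gen; right.
  exact (Igen_full_in_ideal hu hy hW1 hW2 r_le Ig).
exact (Igen_complement_in_ideal hu hy hW1 hW2 r_le Ig).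
Qed.
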